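(* Let $k$ be a number field, $r$ a nonzero integer, $R$ the localization of the ring of integers of $k$ at the powers of $r$, $K$ a field with an $R$-algebra structure, and $B(\mathbf y)=\sum_{\kappa=1}^3B^{(\kappa)}y_\kappa$ a symmetric $3\times3$ matrix of linear forms with coefficients in $R$. Assume that the projective plane curves $\det B(\mathbf y)=0$ and $\det B^\bullet(\mathbf x)=0$ are elliptic curves. Then the $3$-dimensional abelian subalgebras of $\mathfrak g_B(K)$ that are contained in $V=U\oplus W$ are exactly the subspaces $\psi(M)(U)$ for $M\in\mathrm{GL}_2(K)$.
   Context: Let $U=W=T=K^3$ with bases $e_1,e_2,e_3$, $f_1,f_2,f_3$, $g_1,g_2,g_3$; let $\phi:U\times W\to T$, $\phi(u,w)=\sum_\kappa (uB^{(\kappa)}w^{\mathrm T})g_\kappa$ (coordinates as row vectors). $\mathfrak g_B(K)$ is $U\oplus W\oplus T$ with bracket $[(u,w,t),(u',w',t')]=\phi(u,w')-\phi(u',w)\in T$. The bar map $U\to W$, $\sum u_je_j\mapsto\sum u_jf_j$, and its inverse $W\to U$ are both written $x\mapsto\bar x$. For $M=\begin{pmatrix}a&b\\c&d\end{pmatrix}\in\mathrm{GL}_2(K)$, $\psi(M)$ is the automorphism $(u,w,t)\mapsto(au+b\bar w,\,c\bar u+dw,\,(ad-bc)t)$ of $\mathfrak g_B(K)$. The dual matrix is $B^\bullet(\mathbf x)=\big(\sum_{j=1}^3B^{(\kappa)}_{ij}x_j\big)_{i\kappa}$. *)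

From HB Require Import structures.
From mathcomp Require Import all_boot all_order all_algebra all_field.
From mathcomp Require Import mpoly.
Set Implicit Arguments. Unset Strict Implicit. Unset Printing Implicit Defensive.
Import Order.TTheory GRing.Theory Num.Theory.
Local Open Scope ring_scope.

(* A number field k is modelled as a (finite-dimensional) field extension of Q,
   i.e. an [L : fieldExtType rat]. *)

Definition is_alg_int (L : fieldExtType rat) (x : L) : Prop :=
  exists p : {poly int}, p \is monic /\ root (map_poly (fun z : int => z%:~R) p) x.

Definition in_loc (L : fieldExtType rat) (r : int) (x : L) : Prop :=
  exists n : nat, is_alg_int ((r%:~R) ^+ n * x).

(* f : L -> F restricted to R is a (unital) ring homomorphism R -> F,
   i.e. F is an R-algebra via f. *)
Definition ring_hom_on_R (L : fieldExtType rat) (r : int) (F : nzRingType)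
    (f : L -> F) : Prop :=
  [/\ f 1 = 1,
      (forall x y, in_loc r x -> in_loc r y -> f (x + y) = f x + f y) &
      (forall x y, in_loc r x -> in_loc r y -> f (x * y) = f x * f y)].

Definition detB (F : comNzRingType) (B : 'I_3 -> 'M[F]_3) : {mpoly F[3]} :=
  \det (\matrix_(i < 3, j < 3) \sum_(k < 3) (B k i j)%:MP * 'X_k).

Definition detBdual (F : comNzRingType) (B : 'I_3 -> 'M[F]_3) : {mpoly F[3]} :=
  \det (\matrix_(i < 3, k < 3) \sum_(j < 3) (B k i j)%:MP * 'X_j).

(* the projective plane curve p = 0 (p a ternary form over an algebraically
   closed field) is nonsingular: no point of P^2 where p and all its partial
   derivatives vanish.  (If p = 0 identically, every point is singular.) *)
Definition nonsingular_plane_curve (F : closedFieldType) (p : {mpoly F[3]}) : Prop :=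
  forall v : 'I_3 -> F, (exists i, v i != 0) ->
    p.@[v] = 0 -> exists i : 'I_3, (mderiv i p).@[v] != 0.

(* The cubic over R defined by P(B) is an elliptic curve (smooth genus one
   curve over Spec R): every geometric fibre, i.e. the base change along every
   ring homomorphism R -> F with F algebraically closed, is a nonsingular plane
   cubic. *)
Definition elliptic_over_R (L : fieldExtType rat) (r : int)
    (P : forall F : comNzRingType, ('I_3 -> 'M[F]_3) -> {mpoly F[3]})
    (B : 'I_3 -> 'M[L]_3) : Prop :=
  forall (F : closedFieldType) (g : L -> F), ring_hom_on_R r g ->
    nonsingular_plane_curve (P F (fun k => map_mx g (B k))).

Definition gB (K : fieldType) := ('rV[K]_3 * 'rV[K]_3 * 'rV[K]_3)%type.

Definition phiB (K : fieldType) (B : 'I_3 -> 'M[K]_3) (u w : 'rV[K]_3) : 'rV[K]_3 :=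
  \row_(k < 3) (u *m B k *m w^T) 0 0.

Definition bracketB (K : fieldType) (B : 'I_3 -> 'M[K]_3) (x y : gB K) : gB K :=
  (0, 0, phiB B x.1.1 y.1.2 - phiB B y.1.1 x.1.2).

Definition abelian_subalgebra (K : fieldType) (B : 'I_3 -> 'M[K]_3)
    (S : {vspace gB K}) : Prop :=
  (forall x y, x \in S -> y \in S -> bracketB B x y \in S) /\
  (forall x y, x \in S -> y \in S -> bracketB B x y = 0).

Definition in_V (K : fieldType) (S : {vspace gB K}) : Prop :=
  forall x, x \in S -> x.2 = 0.

(* the bar maps U -> W, W -> U are the identity on coordinates, so
   psi(M)(u,w,t) = (a u + b wbar, c ubar + d w, (ad - bc) t) *)
Definition psiB (K : fieldType) (M : 'M[K]_2) (x : gB K) : gB K :=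
  (M 0 0 *: x.1.1 + M 0 1 *: x.1.2, M 1 0 *: x.1.1 + M 1 1 *: x.1.2,
   (M 0 0 * M 1 1 - M 0 1 * M 1 0) *: x.2).

(* Let S be a 3-dimensional subspace of V = U + W, and let P, Q be the matrices
   of U- and W-coordinates of a basis of S; S is abelian iff every P B_k Q^T is
   symmetric.  Over an algebraic closure this forces P and Q to be proportional.
   If P is singular, the rows of P and of (ker P) Q are B-orthogonal and their
   ranks add up to 3, so one of them has rank >= 2 while the other is nonzero.
   A nonzero x that is B-orthogonal to a matrix of rank >= 2 has
   rank B^•(x) <= 1, so x is a singular point of the dual cubic det B^• = 0.  So
   P = 0, and if P is invertible the same argument applies to Q - lam P for an
   eigenvalue lam of P^-1 Q.  Finally c P = a Q says exactly that S = psi(M)(U)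
   for any M with first column (a, c). *)

From HB Require Import structures.
From mathcomp Require Import all_boot all_order all_algebra all_field.
From mathcomp Require Import mpoly closed_field ring zify.
From Stdlib Require Import ClassicalDescription IndefiniteDescription.
Set Implicit Arguments. Unset Strict Implicit. Unset Printing Implicit Defensive.
Import GRing.Theory.
Local Open Scope ring_scope.

Section GeneratedSubfield.
Variables (K : fieldType) (T : countType) (gen : T -> K).

(* The values of these expression trees form the subfield generated by [gen]. *)
Fixpoint gen_eval (t : GenTree.tree T) : K :=
  match t with
  | GenTree.Leaf x => gen x
  | GenTree.Node 0 [:: a; b] => gen_eval a - gen_eval b
  | GenTree.Node _ [:: a; b] => gen_eval a / gen_eval b
  | GenTree.Node _ _ => 1
  end.

Definition generated : pred K :=
  fun x => if excluded_middle_informative (exists t, gen_eval t = x) then true else false.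

Lemma generatedP x : reflect (exists t, gen_eval t = x) (x \in generated).
Proof. by rewrite unfold_in /generated; case: excluded_middle_informative; constructor. Qed.

Lemma generated_gen x : gen x \in generated.
Proof. by apply/generatedP; exists (GenTree.Leaf x). Qed.

Lemma generated_divring_closed : GRing.divring_closed generated.
Proof.
split; first by apply/generatedP; exists (GenTree.Node 1 [::]).
  move=> _ _ /generatedP[a <-] /generatedP[b <-].
  by apply/generatedP; exists (GenTree.Node 0 [:: a; b]).
move=> _ _ /generatedP[a <-] /generatedP[b <-].
by apply/generatedP; exists (GenTree.Node 1 [:: a; b]).
Qed.

HB.instance Definition _ := GRing.isDivringClosed.Build K generated generated_divring_closed.

Record gen_field := GenField { gen_val :> K; gen_valP : gen_val \in generated }.

HB.instance Definition _ := [isSub for gen_val].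
HB.instance Definition _ := [Choice of gen_field by <:].

Definition gen_code (x : gen_field) : GenTree.tree T :=
  proj1_sig (constructive_indefinite_description _ (elimT (generatedP x) (gen_valP x))).

Lemma gen_codeK : pcancel gen_code (fun t => insub (gen_eval t)).
Proof.
move=> x; rewrite /gen_code; case: constructive_indefinite_description => t /= ->.
by rewrite valK.
Qed.

HB.instance Definition _ := PCanIsCountable gen_codeK.
HB.instance Definition _ := [SubChoice_isSubIntegralDomain of gen_field by <:].
HB.instance Definition _ := [SubIntegralDomain_isSubField of gen_field by <:].

Definition gen_lift : K -> gen_field := insubd 0.

Lemma gen_liftK x : x \in generated -> val (gen_lift x) = x.
Proof. exact: insubdK. Qed.

End GeneratedSubfield.

Definition proportional (R : nzRingType) m n (P Q : 'M[R]_(m, n)) :=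
  forall i j i' j', P i j * Q i' j' = Q i j * P i' j'.

Definition abelian_pair (R : nzRingType) p n (B : 'I_p -> 'M[R]_n) m (P Q : 'M[R]_(m, n)) :=
  forall k, P *m B k *m Q^T = Q *m B k *m P^T.

Section FieldMatrices.
Variable F : fieldType.

Lemma proportionalP m n (P Q : 'M[F]_(m, n)) : proportional P Q ->
  exists a c : F, ((a != 0) || (c != 0)) /\ c *: P = a *: Q.
Proof.
move=> PQ; have [-> | /matrix0Pn[i [j Pij]]] := eqVneq P 0.
  by exists 0, 1; rewrite oner_neq0 orbT scaler0 scale0r.
exists (P i j), (Q i j); rewrite Pij; split=> //.
by apply/matrixP => i' j'; rewrite !mxE PQ mulrC.
Qed.

Lemma map_proportional (E : nzRingType) (f : {rmorphism F -> E}) m n (P Q : 'M[F]_(m, n)) :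
  proportional (map_mx f P) (map_mx f Q) <-> proportional P Q.
Proof.
split=> PQ i j i' j'; last by rewrite !mxE -!rmorphM PQ.
by apply: (fmorph_inj f); rewrite !rmorphM; have := PQ i j i' j'; rewrite !mxE.
Qed.

Lemma map_abelian_pair (E : fieldType) (f : {rmorphism F -> E}) p n
    (B : 'I_p -> 'M[F]_n) m (P Q : 'M[F]_(m, n)) :
  abelian_pair (fun k => map_mx f (B k)) (map_mx f P) (map_mx f Q) <-> abelian_pair B P Q.
Proof.
split=> PQ k; last by rewrite !map_trmx -!map_mxM PQ.
by have := PQ k; rewrite !map_trmx -!map_mxM => /map_mx_inj.
Qed.

Lemma rank_le1_factor m n (A : 'M[F]_(m, n)) : (\rank A <= 1)%N ->
  exists (c : 'I_m -> F) (d : 'I_n -> F), forall i k, A i k = c i * d k.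
Proof.
rewrite -{2}(mulmx_base A); move: (col_base A) (row_base A).
case: (\rank A) => [|[|//]] C R _.
  by exists (fun _ => 0), (fun _ => 0) => i k; rewrite mxE big_ord0 mul0r.
by exists (fun i => C i 0), (fun k => R 0 k) => i k; rewrite mxE big_ord1.
Qed.

End FieldMatrices.

Lemma det_mx33 (R : comNzRingType) (A : 'M[R]_3) : \det A =
  A 0 0 * (A 1 1 * A 2 2 - A 1 2 * A 2 1)
  - A 0 1 * (A 1 0 * A 2 2 - A 1 2 * A 2 0)
  + A 0 2 * (A 1 0 * A 2 1 - A 1 1 * A 2 0).
Proof.
rewrite (expand_det_row _ 0) !big_ord_recl big_ord0 /cofactor.
rewrite !(expand_det_row _ 0) !big_ord_recl !big_ord0 /cofactor !det_mx11 !mxE /=.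
pose a (i j : nat) := A (inord i) (inord j).
have E (i j : 'I_3) : A i j = a i j by rewrite /a !inord_val.
by rewrite !E /= /bump /=; ring.
Qed.

(* [det N] and all its partial derivatives are combinations of 2x2 minors of [N]. *)
Lemma det_mx33_rank1_singular (R : comNzRingType) n (N : 'M[{mpoly R[n]}]_3)
    (v : 'I_n -> R) (c d : 'I_3 -> R) :
  (forall i k, (N i k).@[v] = c i * d k) ->
  (\det N).@[v] = 0 /\ forall l, (mderiv l (\det N)).@[v] = 0.
Proof.
move=> Nv; split=> [|l]; rewrite det_mx33.
  by rewrite !(mevalB, mevalD, mevalM) !Nv; ring.
by rewrite !(mderivB, mderivD, mderivM) !(mevalB, mevalD, mevalM) !Nv; ring.
Qed.

Definition dualmx (R : nzRingType) p m n (B : 'I_p -> 'M[R]_(m, n)) (x : 'rV[R]_n) :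
  'M[R]_(m, p) := \matrix_(i, k) \sum_j B k i j * x 0 j.

Lemma mulmx_dualmx (R : comNzRingType) p m n (B : 'I_p -> 'M[R]_(m, n)) (x : 'rV[R]_n)
    l (Z : 'M[R]_(l, m)) :
  (forall k, Z *m B k *m x^T = 0) -> Z *m dualmx B x = 0.
Proof.
move=> ZBx; apply/matrixP => i k.
transitivity ((Z *m B k *m x^T) i 0); last by rewrite ZBx !mxE.
rewrite !mxE; under eq_bigr do rewrite mxE big_distrr.
under [RHS]eq_bigr do rewrite !mxE big_distrl.
by rewrite exchange_big; apply: eq_bigr => j _; apply: eq_bigr => j' _; apply: mulrA.
Qed.

Section DualCubic.
Variables (F : closedFieldType) (B : 'I_3 -> 'M[F]_3).
Hypothesis B_sym : forall k, (B k)^T = B k.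
Hypothesis dual_smooth : nonsingular_plane_curve (detBdual B).

Lemma dualmx_rank_gt1 (x : 'rV[F]_3) : x != 0 -> (1 < \rank (dualmx B x))%N.
Proof.
move=> /matrix0Pn[i0 [j0]]; rewrite (ord1 i0) => xj0.
rewrite ltnNge; apply/negP => /rank_le1_factor[c [d cd]].
pose N := \matrix_(i, k) \sum_j (B k i j)%:MP * 'X_j : 'M[{mpoly F[3]}]_3.
have Nx i k : (N i k).@[x 0] = c i * d k.
  rewrite mxE -cd mxE raddf_sum; apply: eq_bigr => j _.
  by rewrite /= mevalM mevalC mevalXU.
have [sing0 sing1] := det_mx33_rank1_singular Nx.
have [l] := dual_smooth (ex_intro _ j0 xj0) sing0.
by rewrite /detBdual sing1 eqxx.
Qed.

Lemma B_orth_sym m m' (X : 'M[F]_(m, 3)) (Y : 'M[F]_(m', 3)) :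
  (forall k, X *m B k *m Y^T = 0) -> forall k, Y *m B k *m X^T = 0.
Proof.
by move=> XY k; apply: trmx_inj; rewrite !trmx_mul trmxK B_sym mulmxA XY trmx0.
Qed.

Lemma B_orth_rank_le1 m m' (X : 'M[F]_(m, 3)) (Y : 'M[F]_(m', 3)) :
  (forall k, X *m B k *m Y^T = 0) -> X != 0 -> (\rank Y <= 1)%N.
Proof.
move=> XY /matrix0Pn[i [j Xij]].
have xn0 : row i X != 0 by apply/matrix0Pn; exists 0, j; rewrite mxE.
have /mulmx0_rank_max : Y *m dualmx B (row i X) = 0.
  apply: mulmx_dualmx; apply: B_orth_sym => k.
  by rewrite -!row_mul XY row0.
by have := dualmx_rank_gt1 xn0; lia.
Qed.

Lemma abelian_pair_nonunit (P Q : 'M[F]_3) :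
  abelian_pair B P Q -> row_free (row_mx P Q) -> ~~ (P \in unitmx) -> P = 0.
Proof.
move=> PQ PQfree Pnu; have [// | P0] := eqVneq P 0; exfalso.
pose Y := kermx P *m Q.
have PY k : P *m B k *m Y^T = 0.
  by rewrite trmx_mul mulmxA PQ -!mulmxA -trmx_mul mulmx_ker trmx0 !mulmx0.
have rankY : \rank Y = (3 - \rank P)%N.
  have := mxrankMfree (kermx P) PQfree.
  by rewrite mul_mx_row mulmx_ker rank_row_0mx mxrank_ker.
have rankP : (\rank P < 3)%N.
  by move: Pnu; rewrite -row_free_unit ltn_neqAle rank_leq_col andbT.
have Y0 : Y != 0 by rewrite -mxrank_eq0 rankY; lia.
have := B_orth_rank_le1 PY P0; have := B_orth_rank_le1 (B_orth_sym PY) Y0; lia.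
Qed.

Lemma closed_abelian_pair_proportional (P Q : 'M[F]_3) :
  abelian_pair B P Q -> row_free (row_mx P Q) -> proportional P Q.
Proof.
move=> PQ PQfree; have [Pu | /(abelian_pair_nonunit PQ PQfree) ->] := boolP (P \in unitmx);
  last by move=> i j i' j'; rewrite !mxE mul0r mulr0.
pose A := invmx P *m Q.
have /closed_rootP[lam] : size (char_poly A) != 1%N by rewrite size_char_poly.
rewrite -eigenvalue_root_char /eigenvalue /eigenspace kermx_eq0 row_free_unit => Anu.
have QP : abelian_pair B (Q - lam *: P) P.
  have trZ : (lam *: P)^T = lam *: P^T by apply/matrixP => i j; rewrite !mxE.
  by move=> k; rewrite !mulmxBl -!scalemxAl -PQ linearB /= mulmxBr trZ -scalemxAr.
have QPfree : row_free (row_mx (Q - lam *: P) P).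
  apply: inj_row_free => v; rewrite mul_mx_row => /eqP; rewrite row_mx_eq0 => /andP[_ /eqP vP].
  have Pfree : row_free P by rewrite row_free_unit.
  by apply: (row_free_inj Pfree); rewrite vP mul0mx.
have QPnu : ~~ (Q - lam *: P \in unitmx).
  have -> : Q - lam *: P = P *m (A - lam%:M) by rewrite mulmxBr mul_mx_scalar mulKVmx.
  by rewrite unitmx_mul (negbTE Anu) andbF.
have /eqP := abelian_pair_nonunit QP QPfree QPnu; rewrite subr_eq0 => /eqP ->.
by move=> i j i' j'; rewrite !mxE mulrCA mulrA.
Qed.

End DualCubic.

Section Transfer.
Variables (L : fieldExtType rat) (r : int) (K : fieldType) (f : L -> K).
Hypothesis f_hom : ring_hom_on_R r f.

Lemma ring_hom_on_R_lift (T : countType) (gen : T -> K) (F : nzRingType)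
    (iota : {rmorphism gen_field gen -> F}) :
  (forall l, f l \in generated gen) -> ring_hom_on_R r (iota \o (gen_lift gen \o f)).
Proof.
move=> f_gen; have [f1 fD fM] := f_hom.
have liftfK l : val (gen_lift gen (f l)) = f l := gen_liftK (f_gen l).
split=> [|x y Rx Ry|x y Rx Ry] /=.
- by rewrite -(rmorph1 iota); congr (iota _); apply: val_inj; rewrite /= liftfK.
- by rewrite -rmorphD; congr (iota _); apply: val_inj; rewrite /= !liftfK fD.
- by rewrite -rmorphM; congr (iota _); apply: val_inj; rewrite /= !liftfK fM.
Qed.

Variable B : 'I_3 -> 'M[L]_3.
Hypothesis B_sym : forall k, (B k)^T = B k.
Hypothesis dual_elliptic : elliptic_over_R r detBdual B.

(* [K] need not be countable, so we pass through the countable subfield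
   generated by [f L] and the entries of [P] and [Q], which embeds into an
   algebraic closure. *)
Lemma abelian_pair_proportional (P Q : 'M[K]_3) :
  abelian_pair (fun k => map_mx f (B k)) P Q -> row_free (row_mx P Q) -> proportional P Q.
Proof.
move=> PQ PQfree.
pose e := vbasis (fullv : {vspace L}).
pose gen (s : 'rV[rat]_(\dim (fullv : {vspace L})) + 'I_3 * 'I_3 + 'I_3 * 'I_3) : K :=
  match s with
  | inl (inl v) => f (\sum_i v 0 i *: e`_i)
  | inl (inr (i, j)) => P i j
  | inr (i, j) => Q i j
  end.
have f_gen l : f l \in generated gen.
  have -> : l = \sum_i (\row_i coord e i l) 0 i *: e`_i.
    by rewrite {1}(coord_vbasis (memvf l)); apply: eq_bigr => i _; rewrite mxE.
  exact: (generated_gen gen (inl (inl _))).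
pose lift := gen_lift gen; pose P1 := map_mx lift P; pose Q1 := map_mx lift Q.
have eP : map_mx val P1 = P.
  by apply/matrixP => i j; rewrite !mxE gen_liftK ?(generated_gen gen (inl (inr (i, j)))).
have eQ : map_mx val Q1 = Q.
  by apply/matrixP => i j; rewrite !mxE gen_liftK ?(generated_gen gen (inr (i, j))).
have eB k : map_mx val (map_mx (lift \o f) (B k)) = map_mx f (B k).
  by apply/matrixP => i j; rewrite !mxE gen_liftK ?f_gen.
have [F [iota _]] := countable_algebraic_closure (gen_field gen).
pose g := iota \o (lift \o f).
have PQ1 : abelian_pair (fun k => map_mx (lift \o f) (B k)) P1 Q1.
  by apply/(map_abelian_pair val) => k; rewrite eP eQ eB; exact: PQ.
have PQF : abelian_pair (fun k => map_mx g (B k)) (map_mx iota P1) (map_mx iota Q1).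
  move=> k; rewrite (map_mx_comp (lift \o f) iota).
  exact: (map_abelian_pair iota _ P1 Q1).2 PQ1 k.
have PQFfree : row_free (row_mx (map_mx iota P1) (map_mx iota Q1)).
  by rewrite -map_row_mx row_free_map -(row_free_map val) map_row_mx eP eQ.
have B_symF k : (map_mx g (B k))^T = map_mx g (B k) by rewrite map_trmx B_sym.
have g_hom : ring_hom_on_R r g := ring_hom_on_R_lift iota f_gen.
rewrite -eP -eQ map_proportional -(map_proportional iota).
exact: closed_abelian_pair_proportional B_symF (dual_elliptic g_hom) _ _ PQF PQFfree.
Qed.

End Transfer.

Section PsiU.
Variable K : fieldType.

(* [psiU a c u = psiB M (u, 0, 0)] for every [M] with first column [(a, c)]. *)
Definition psiU (a c : K) (u : 'rV[K]_3) : gB K := (a *: u, c *: u, 0).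

Fact psiU_is_linear a c : linear (psiU a c).
Proof.
move=> k u v; rewrite /psiU; congr (_, _, _) => /=; last by rewrite scaler0 addr0.
  by rewrite scalerDr !scalerA mulrC.
by rewrite scalerDr !scalerA mulrC.
Qed.

HB.instance Definition _ a c :=
  GRing.isLinear.Build K 'rV[K]_3 (gB K) _ (psiU a c) (psiU_is_linear a c).

Definition psiU_space (a c : K) : {vspace gB K} := (linfun (psiU a c) @: fullv)%VS.

Lemma psiU_spaceP a c x : reflect (exists u, x = psiU a c u) (x \in psiU_space a c).
Proof.
apply: (iffP memv_imgP) => [[u _ ->] | [u ->]]; exists u; by rewrite ?memvf ?lfunE.
Qed.

Lemma psiU_inj a c : (a != 0) || (c != 0) -> injective (psiU a c).
Proof.
by case/orP=> [a0 | c0] u v [au cv]; [exact: (scalerI a0) | exact: (scalerI c0)].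
Qed.

Lemma dim_psiU_space a c : (a != 0) || (c != 0) -> \dim (psiU_space a c) = 3%N.
Proof.
move=> ac; rewrite limg_dim_eq ?dimvf // capfv; apply/eqP/lker0P => u v.
by rewrite !lfunE; exact: psiU_inj.
Qed.

Lemma psiU_space_mem a c x : (a != 0) || (c != 0) -> x.2 = 0 ->
  c *: x.1.1 = a *: x.1.2 -> x \in psiU_space a c.
Proof.
case: x => [[u w] t] /= ac -> cuaw; apply/psiU_spaceP.
have [a0 | a0] := eqVneq a 0.
  rewrite a0 eqxx /= in ac; rewrite a0 scale0r in cuaw.
  exists (c^-1 *: w); rewrite /psiU a0 scale0r scalerA mulfV // scale1r.
  by move/eqP: cuaw; rewrite scaler_eq0 (negbTE ac) => /eqP ->.
exists (a^-1 *: u); rewrite /psiU scalerA mulfV // scale1r scalerA mulrC -scalerA cuaw.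
by rewrite scalerA mulVf // scale1r.
Qed.

Lemma gB_lincomb n (lam : 'rV[K]_n) (x : 'I_n -> gB K) :
  let s := \sum_i lam 0 i *: x i in
  [/\ s.1.1 = lam *m \matrix_i (x i).1.1, s.1.2 = lam *m \matrix_i (x i).1.2
    & s.2 = lam *m \matrix_i (x i).2].
Proof.
have proj (h : gB K -> 'rV[K]_3) : (forall y z, h (y + z) = h y + h z) -> h 0 = 0 ->
    (forall b y, h (b *: y) = b *: h y) ->
    h (\sum_i lam 0 i *: x i) = lam *m \matrix_i h (x i).
  move=> hD h0 hZ; rewrite (big_morph h hD h0) mulmx_sum_row.
  by apply: eq_bigr => i _; rewrite hZ rowK.
by split; [apply: (proj (fun y => y.1.1)) | apply: (proj (fun y => y.1.2))
  | apply: (proj (fun y => y.2))].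
Qed.

Lemma mem_psiU_space_psiB (M : 'M[K]_2) x :
  x \in psiU_space (M 0 0) (M 1 0) <-> exists u, x = psiB M (u, 0, 0).
Proof.
have psiB_U u : psiB M (u, 0, 0) = psiU (M 0 0) (M 1 0) u.
  by rewrite /psiB /psiU /= !scaler0 !addr0.
by split=> [/psiU_spaceP[u ->] | [u ->]]; [exists u | apply/psiU_spaceP; exists u].
Qed.

End PsiU.

Section AbelianSubalgebras.
Variables (K : fieldType) (B : 'I_3 -> 'M[K]_3).
Hypothesis B_sym : forall k, (B k)^T = B k.

Lemma phiB_sym u w : phiB B u w = phiB B w u.
Proof.
apply/rowP => k; rewrite [LHS]mxE [RHS]mxE.
transitivity ((u *m B k *m w^T)^T 0 0); first by rewrite [RHS]mxE.
by rewrite !trmx_mul trmxK B_sym mulmxA.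
Qed.

Lemma phiBZ a c u w : phiB B (a *: u) (c *: w) = (a * c) *: phiB B u w.
Proof.
by apply/rowP => k; rewrite [LHS]mxE linearZ /= -!scalemxAl -scalemxAr scalerA !mxE.
Qed.

Lemma mulmx_tr_phiB m m' (X : 'M[K]_(m, 3)) (Y : 'M[K]_(m', 3)) k i j :
  (X *m B k *m Y^T) i j = phiB B (row i X) (row j Y) 0 k.
Proof. by rewrite [RHS]mxE -row_mul !mxE; apply: eq_bigr => l _; rewrite !mxE. Qed.

Lemma bracket_psiU a c u w : bracketB B (psiU a c u) (psiU a c w) = 0.
Proof. by rewrite /bracketB /= !phiBZ (phiB_sym w u) mulrC subrr. Qed.

Lemma psiU_space_abelian a c : (a != 0) || (c != 0) ->
  \dim (psiU_space a c) = 3%N /\ in_V (psiU_space a c) /\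
  abelian_subalgebra B (psiU_space a c).
Proof.
move=> ac; split; first exact: dim_psiU_space.
have bracket0 x y : x \in psiU_space a c -> y \in psiU_space a c -> bracketB B x y = 0.
  by move=> /psiU_spaceP[u ->] /psiU_spaceP[w ->]; exact: bracket_psiU.
split; first by move=> x /psiU_spaceP[u ->].
by split=> x y xS yS; rewrite bracket0 ?mem0v.
Qed.

Hypothesis B_proportional : forall P Q : 'M[K]_3,
  abelian_pair B P Q -> row_free (row_mx P Q) -> proportional P Q.

Lemma abelianV_psiU_space S : \dim S = 3%N -> in_V S -> abelian_subalgebra B S ->
  exists a c, ((a != 0) || (c != 0)) /\ S = psiU_space a c.
Proof.
move=> S3 SV [_ Sab].
pose t := tcast S3 (vbasis S).
have t_basis : basis_of S t by rewrite val_tcast; exact: vbasisP.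
have tS (i : 'I_3) : t`_i \in S.
  by rewrite -(span_basis t_basis) memv_span // mem_nth // size_tuple.
have t_span x : x \in S -> exists lam : 'rV_3, x = \sum_i lam 0 i *: t`_i.
  rewrite -(span_basis t_basis) => /coord_span ->.
  by exists (\row_i coord t i x); apply: eq_bigr => i _; rewrite mxE.
pose P := \matrix_(i < 3) (t`_i).1.1; pose Q := \matrix_(i < 3) (t`_i).1.2.
have PQ : abelian_pair B P Q.
  move=> k; apply/matrixP => i j; rewrite !mulmx_tr_phiB !rowK (phiB_sym (t`_i).1.2).
  have /(congr1 (fun x : gB K => x.2 0 k)) := Sab _ _ (tS i) (tS j).
  by rewrite /bracketB /= !mxE => /eqP; rewrite subr_eq0 => /eqP.
have PQfree : row_free (row_mx P Q).
  apply: inj_row_free => v; rewrite mul_mx_row => /eqP.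
  rewrite row_mx_eq0 => /andP[/eqP vP /eqP vQ].
  have tV : \matrix_i (t`_i).2 = 0 :> 'M[K]_3.
    by apply/matrixP => i j; rewrite !mxE (SV _ (tS i)) mxE.
  have [s1 s2 s3] := gB_lincomb v (fun i => t`_i).
  have s0 : \sum_i v 0 i *: t`_i = 0.
    move: s1 s2 s3; case: (\sum_i _) => [[? ?] ?] /= -> -> ->.
    by rewrite -/P -/Q vP vQ tV mulmx0.
  by apply/rowP => i; rewrite mxE; move/freeP: (basis_free t_basis); apply.
have [a [c [ac cPaQ]]] := proportionalP (B_proportional PQ PQfree).
exists a, c; split=> //.
apply/eqP; rewrite eqEdim dim_psiU_space // S3 leqnn andbT; apply/subvP => x xS.
apply: psiU_space_mem ac (SV x xS) _.
have [lam ->] := t_span x xS; have [-> -> _] := gB_lincomb lam (fun i => t`_i).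
by rewrite !scalemxAr -/P -/Q cPaQ.
Qed.

Lemma abelianV_iff_psiU_space S :
  (\dim S = 3%N /\ in_V S /\ abelian_subalgebra B S) <->
  exists a c, ((a != 0) || (c != 0)) /\ S = psiU_space a c.
Proof.
split=> [[S3 [SV Sab]] | [a [c [ac ->]]]]; last exact: psiU_space_abelian.
exact: abelianV_psiU_space.
Qed.

End AbelianSubalgebras.

Lemma det_mx22 (R : comNzRingType) (M : 'M[R]_2) : \det M = M 0 0 * M 1 1 - M 0 1 * M 1 0.
Proof.
rewrite (expand_det_row _ 0) !big_ord_recl big_ord0 /cofactor !det_mx11 !mxE /=.
pose m (i j : nat) := M (inord i) (inord j).
have E (i j : 'I_2) : M i j = m i j by rewrite /m !inord_val.
by rewrite !E /= /bump /=; ring.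
Qed.

Lemma unitmx2_col0 (K : fieldType) (M : 'M[K]_2) :
  M \in unitmx -> (M 0 0 != 0) || (M 1 0 != 0).
Proof.
rewrite unitmxE unitfE det_mx22; apply: contraNT; rewrite negb_or !negbK.
by case/andP=> /eqP -> /eqP ->; rewrite mul0r mulr0 subrr.
Qed.

Lemma unitmx2_with_col0 (K : fieldType) (a c : K) : (a != 0) || (c != 0) ->
  exists M : 'M[K]_2, [/\ M \in unitmx, M 0 0 = a & M 1 0 = c].
Proof.
move=> ac; pose b : K := (a == 0)%:R; pose d : K := (a != 0)%:R.
exists (\matrix_(i, j) if j == 0 then (if i == 0 then a else c) else (if i == 0 then b else d)).
split; rewrite ?mxE // unitmxE unitfE det_mx22 !mxE /= /b /d.
case: eqVneq ac => [-> /= c0 | a0 _]; first by rewrite mul0r sub0r oppr_eq0 mul1r.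
by rewrite mulr1 mul0r subr0.
Qed.


Theorem proposition4p10
  (L : fieldExtType rat) (r : int) (hr : r != 0)
  (K : fieldType) (f : L -> K) (hf : ring_hom_on_R r f)
  (B : 'I_3 -> 'M[L]_3)
  (hBR : forall k i j, in_loc r (B k i j))
  (hBsym : forall k, (B k)^T = B k)
  (hE1 : elliptic_over_R r detB B)
  (hE2 : elliptic_over_R r detBdual B) :
  let BK := fun k => map_mx f (B k) in
  forall S : {vspace gB K},
    (\dim S = 3%N /\ in_V S /\ abelian_subalgebra BK S) <->
    (exists M : 'M[K]_2, M \in unitmx /\
       forall x : gB K, x \in S <-> exists u : 'rV[K]_3, x = psiB M (u, 0, 0)).
Proof.
move=> BK S.
have BK_sym k : (BK k)^T = BK k by rewrite map_trmx hBsym.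
have BK_proportional := abelian_pair_proportional hf hBsym hE2.
rewrite (abelianV_iff_psiU_space BK_sym BK_proportional).
split=> [[a [c [ac ->]]] | [M [Mu SM]]].
  have [M [Mu <- <-]] := unitmx2_with_col0 ac.
  by exists M; split=> // x; exact: mem_psiU_space_psiB.
exists (M 0 0), (M 1 0); split; first exact: unitmx2_col0.
apply/vspaceP => x; apply/idP/idP => [/SM | ] /mem_psiU_space_psiB //.
by move/SM.
Qed.
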